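(* Let $d\ge2$, $\lambda>0$, $u>0$ and $\mathbf N\sim\mathrm{NDFHL}^{(d)}(\lambda,u)$. Then the differential entropy satisfies $|h(\mathbf N)|<\infty$.
   Context: For an integer $d\ge2$, $\lambda>0$, $u>0$, $\mathrm{NDFHL}^{(d)}(\lambda,u)$ is the probability law on $\mathbb R^{d-1}$ with density $$f(\mathbf n)=\frac{\lambda}{2^{\frac d2-1}\pi^{\frac d2}}\left(\frac{u}{\rho(\mathbf n)}\right)^{\frac d2}e^{\lambda u}K_{\frac d2}\bigl(u\rho(\mathbf n)\bigr),\quad \rho(\mathbf n)=\sqrt{\|\mathbf n\|^2+\lambda^2},$$ $K_\nu$ the modified Bessel function of the second kind. *)

From HB Require Import structures.
From mathcomp Require Import all_boot all_order all_algebra.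
From mathcomp Require Import all_classical all_reals all_analysis.
Set Implicit Arguments. Unset Strict Implicit. Unset Printing Implicit Defensive.
Import Order.TTheory GRing.Theory Num.Theory.
Import numFieldNormedType.Exports.
Local Open Scope classical_set_scope.
Local Open Scope ring_scope.

Section Defs.
Variable R : realType.

(* Lebesgue measure on R^n, realised on n.-tuple R (whose canonical
   sigma-algebra is the product = Borel sigma-algebra), defined as the
   iterated integral:  leb_0 = Dirac mass at the empty tuple,
   leb_{n+1}(A) = \int_R leb_n {t | x :: t \in A} dx. *)
Fixpoint lebesgue_tuple (n : nat) : set (n.-tuple R) -> \bar R :=
  match n return set (n.-tuple R) -> \bar R with
  | 0 => fun A => (\1_A [tuple] : R)%:E
  | n'.+1 => fun A =>
      (\int[@lebesgue_measure R]_x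
          lebesgue_tuple [set t : n'.-tuple R | A [tuple of x :: t]])%E
  end.

Definition cosh (t : R) : R := (expR t + expR (- t)) / 2.

Definition besselK (nu x : R) : R :=
  fine (\int[@lebesgue_measure R]_(t in `[0%R, +oo[%classic)
          (expR (- x * cosh t) * cosh (nu * t))%:E)%E.

Definition sqnorm (n : nat) (v : n.-tuple R) : R :=
  \sum_(i < n) (tnth v i) ^+ 2.

Definition ndfhl_density (d : nat) (lam u : R) (v : (d.-1).-tuple R) : R :=
  let rho := Num.sqrt (sqnorm v + lam ^+ 2) in
  let h := d%:R / 2 in
  lam / (2 `^ (h - 1) * pi `^ h) * (u / rho) `^ h * expR (lam * u)
    * besselK h (u * rho).

Definition diff_entropy (n : nat) (f : n.-tuple R -> R) : \bar R :=
  (- \int[@lebesgue_tuple n]_v (f v * ln (f v))%:E)%E.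

End Defs.

Arguments lebesgue_tuple {R} n _.
Arguments ndfhl_density {R} d lam u v.
Arguments diff_entropy {R} n f.

From HB Require Import structures.
From mathcomp Require Import all_boot all_order all_algebra.
From mathcomp Require Import all_classical all_reals all_analysis.
From mathcomp Require Import measurable_realfun.
From mathcomp Require Import ring lra.
Import Order.TTheory GRing.Theory Num.Theory.
Import numFieldNormedType.Exports.
Local Open Scope classical_set_scope.
Local Open Scope ring_scope.

(* The density depends on [v] only through [rho v = sqrt (|v|^2 + lam^2) >= lam],
   via a profile that is nonincreasing, hence measurable.  The integral
   representation [K_nu x = \int_0^oo exp (- x cosh t) cosh (nu t) dt] shows that
   [K_nu] is finite, nonincreasing, and decays like [exp (- x / 2)]; therefore the
   density is at most [B exp (- u rho / 2) <= B g v ^ 2], where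
   [g v = exp (- c \sum_i |v_i|)] is integrable for the iterated Lebesgue measure
   by Tonelli.  Finally [|x ln x| <= 2 sqrt x + x^2] bounds [|f ln f|] by a
   multiple of [g]. *)

Section tuple_cons.
Context {d} {T : measurableType d} {n : nat}.

Definition tuple_cons (p : T * n.-tuple T) : n.+1.-tuple T := [tuple of p.1 :: p.2].

Definition tuple_uncons (v : n.+1.-tuple T) : T * n.-tuple T :=
  (thead v, [tuple of behead v]).

Lemma measurable_tuple_cons : measurable_fun setT tuple_cons.
Proof. exact: measurable_cons. Qed.

Lemma measurable_tuple_uncons : measurable_fun setT tuple_uncons.
Proof.
apply/measurable_fun_pairP; split; first exact: (measurable_tnth ord0).
exact: measurable_behead.
Qed.

Lemma tuple_unconsK : cancel tuple_cons tuple_uncons.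
Proof. by move=> [x t]; congr pair; exact: val_inj. Qed.

End tuple_cons.

Section cons_measure.
Context {R : realType} {n : nat}.
Variable m : {sigma_finite_measure set (n.-tuple R) -> \bar R}.

Definition cons_measure : set (n.+1.-tuple R) -> \bar R :=
  pushforward (@lebesgue_measure R \x m)%E (@tuple_cons _ R n).

(* [pushforward] is a measure only along a measurable map, so its instance must
   be instantiated by hand. *)
HB.instance Definition _ := Measure.copy cons_measure
  (measure_function_pushforward__canonical__measure_function_Measure
     (@lebesgue_measure R \x m)%E (@measurable_tuple_cons _ R n)).

Let cons_measure_sigma_finite : sigma_finite setT cons_measure.
Proof.
(* The library's instance stating that [\x] preserves sigma-finiteness is not
   the canonical one (that is the instance for subprobabilities), so we use its
   mixin directly. *)
have [F FT Ffin] := isSigmaFinite.sigma_finiteT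
  (lebesgue_integral_fubini.measure_function_Measure_isSigmaFinite__to__measure_function_isSigmaFinite
     (@lebesgue_measure R) m).
exists (fun i => tuple_uncons @^-1` F i).
  by rewrite -preimage_bigcup -FT preimage_setT.
move=> i; have [mFi Fi_lty] := Ffin i; split.
  by rewrite -[X in measurable X]setTI; exact: measurable_tuple_uncons.
rewrite /cons_measure /pushforward.
suff -> : tuple_cons @^-1` (tuple_uncons @^-1` F i) = F i by [].
by apply/seteqP; split => p /=; rewrite tuple_unconsK.
Qed.

HB.instance Definition _ :=
  Measure_isSigmaFinite.Build _ _ _ cons_measure cons_measure_sigma_finite.

Lemma integral_cons_measure (g : n.+1.-tuple R -> \bar R) :
  measurable_fun [set: n.+1.-tuple R] g -> (forall v, 0 <= g v)%E ->
  (\int[cons_measure]_v g v =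
   \int[@lebesgue_measure R]_x \int[m]_t g (tuple_cons (x, t)))%E.
Proof.
move=> mg g0; rewrite ge0_integral_pushforward//; last exact: measurable_tuple_cons.
rewrite preimage_setT fubini_tonelli1//; last by move=> p; exact: g0.
exact: measurableT_comp mg (@measurable_tuple_cons _ _ n).
Qed.

End cons_measure.

Section lebesgue_tuple_measure.
Context {R : realType}.

Fixpoint lebesgue_tuple_measure n :
    {sigma_finite_measure set (n.-tuple R) -> \bar R} :=
  if n is n'.+1 then cons_measure (lebesgue_tuple_measure n')
  else \d_([tuple] : 0.-tuple R).

Lemma lebesgue_tupleE n : lebesgue_tuple n = lebesgue_tuple_measure n.
Proof.
elim: n => [//|n IHn]; apply/funext => A /=.
rewrite IHn /cons_measure /pushforward /product_measure1.
apply: eq_integral => x _ /=; congr (_ _).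
by apply/seteqP; split => t /=; rewrite /xsection /= inE.
Qed.

End lebesgue_tuple_measure.

Section l1_exponential.
Context {R : realType}.

Definition exp_neg_l1 (c : R) {n} (v : n.-tuple R) : R :=
  expR (- c * \sum_(i < n) `|tnth v i|).

Lemma measurable_exp_neg_l1 c n : measurable_fun setT (@exp_neg_l1 c n).
Proof.
apply: measurableT_comp => //; apply: measurable_funM => //.
apply: measurable_sum => i; apply: measurableT_comp => //.
exact: measurable_tnth.
Qed.

Lemma exp_neg_l1_cons c n x (t : n.-tuple R) :
  exp_neg_l1 c (tuple_cons (x, t)) = expR (- c * `|x|) * exp_neg_l1 c t.
Proof.
rewrite /exp_neg_l1 big_ord_recl -expRD mulrDr tnth0.
by congr (expR (_ + _ * _)); apply: eq_bigr => i _; rewrite tnthS.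
Qed.

Lemma integral_exponential_pdfN (c : R) : 0 < c ->
  (\int[@lebesgue_measure R]_x (exponential_pdf c (- x))%:E = 1)%E.
Proof.
move=> c0; rewrite -(integral_exponential_pdf c0).
have mp : measurable_fun setT (exponential_pdf c).
  by apply: measurable_exponential_pdf; exact: ltW.
transitivity (\int[pushforward lebesgue_measure
    (-%R : measurableTypeR R -> measurableTypeR R)]_x (exponential_pdf c x)%:E)%E.
  rewrite ge0_integral_pushforward ?preimage_setT //.
    exact/measurable_EFinP.
  by move=> x _; rewrite lee_fin exponential_pdf_ge0 // ltW.
by apply: eq_measure_integral => A mA _; exact: lebesgue_measureN.
Qed.

Lemma expR_neg_abs_le (c x : R) : 0 < c ->
  expR (- c * `|x|) <= c^-1 * (exponential_pdf c x + exponential_pdf c (- x)).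
Proof.
move=> c0; have pdf_ge0 y : 0 <= exponential_pdf c y.
  exact/exponential_pdf_ge0/ltW.
wlog x0 : x / 0 <= x.
  move=> H; have [/H//|/ltW x0] := leP 0 x.
  by rewrite addrC -normrN; have := H (- x); rewrite opprK oppr_ge0; apply.
rewrite exponential_pdfE // ger0_norm // mulrDr mulrA mulVf ?gt_eqF // mul1r.
by rewrite lerDl mulr_ge0 // invr_ge0 ltW.
Qed.

Lemma integral_expR_neg_abs_lty (c : R) : 0 < c ->
  (\int[@lebesgue_measure R]_x (expR (- c * `|x|))%:E < +oo)%E.
Proof.
move=> c0; have pdf_ge0 x : 0 <= exponential_pdf c x.
  exact/exponential_pdf_ge0/ltW.
have mp : measurable_fun setT (exponential_pdf c).
  by apply: measurable_exponential_pdf; exact: ltW.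
have mpN : measurable_fun setT (fun x : R => exponential_pdf c (- x)).
  exact: measurableT_comp.
apply: (@le_lt_trans _ _ (\int[@lebesgue_measure R]_x
    (c^-1 * (exponential_pdf c x + exponential_pdf c (- x)))%:E)%E).
  apply: ge0_le_integral => //.
  - apply/measurable_EFinP; apply: measurableT_comp => //.
    by apply: measurable_funM => //; exact: normr_measurable.
  - apply/measurable_EFinP; apply: measurable_funM => //.
    exact: measurable_funD.
  - by move=> x _; rewrite lee_fin expR_neg_abs_le.
under eq_integral do rewrite EFinM EFinD.
rewrite ge0_integralZl_EFin ?invr_ge0 ?(ltW c0) //; last 2 first.
- by move=> x _; rewrite adde_ge0 // lee_fin.
- by apply: emeasurable_funD; exact/measurable_EFinP.
rewrite ge0_integralD //; last 4 first.
- by move=> x _; rewrite lee_fin.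
- exact/measurable_EFinP.
- by move=> x _; rewrite lee_fin.
- exact/measurable_EFinP.
rewrite integral_exponential_pdf // integral_exponential_pdfN //.
by rewrite -EFinD -EFinM ltry.
Qed.

Lemma integral_exp_neg_l1_lty (c : R) n : 0 < c ->
  (\int[lebesgue_tuple n]_v (exp_neg_l1 c v)%:E < +oo)%E.
Proof.
move=> c0; rewrite lebesgue_tupleE; elim: n => [|n IHn] /=.
  rewrite integral_dirac ?diracT ?mul1e ?ltry //.
  by apply/measurable_EFinP; exact: measurable_exp_neg_l1.
have g_ge0 k (v : k.-tuple R) : (0 <= (exp_neg_l1 c v)%:E)%E.
  by rewrite lee_fin expR_ge0.
rewrite integral_cons_measure //; last first.
  by apply/measurable_EFinP; exact: measurable_exp_neg_l1.
under eq_integral => x _.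
  under eq_integral do rewrite exp_neg_l1_cons EFinM.
  rewrite ge0_integralZl_EFin ?expR_ge0 //; last first.
    by apply/measurable_EFinP; exact: measurable_exp_neg_l1.
  over.
rewrite ge0_integralZr ?integral_ge0 //.
  rewrite lte_mul_pinfty ?integral_ge0 ?ge0_fin_numE ?integral_expR_neg_abs_lty //.
  by apply: integral_ge0 => x _; rewrite lee_fin expR_ge0.
apply/measurable_EFinP; apply: measurableT_comp => //.
by apply: measurable_funM => //; exact: normr_measurable.
Qed.

End l1_exponential.

Section cosh.
Context {R : realType}.
Implicit Types t : R.

Lemma cosh_ge1 t : 1 <= cosh t.
Proof.
rewrite /cosh ler_pdivlMr // mul1r.
by have := expR_ge1Dx t; have := expR_ge1Dx (- t); lra.
Qed.

Lemma cosh_ge0 t : 0 <= cosh t.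
Proof. exact: le_trans (cosh_ge1 t). Qed.

Lemma measurable_cosh : measurable_fun setT (@cosh R).
Proof.
apply: measurable_funM => //; apply: measurable_funD => //.
exact: measurableT_comp.
Qed.

Lemma cosh_le_expR t : 0 <= t -> cosh t <= expR t.
Proof.
move=> t0; rewrite /cosh ler_pdivrMr //.
have : expR (- t) <= expR t by rewrite ler_expR; lra.
lra.
Qed.

Lemma sqr_le_cosh t : 0 <= t -> t ^+ 2 / 8 <= cosh t.
Proof.
move=> t0; have : 0 <= 1 + t / 2 by lra.
have : 1 + t / 2 <= expR (t / 2) := expR_ge1Dx _.
have -> : cosh t = (expR (t / 2) ^+ 2 + expR (- t)) / 2.
  by rewrite /cosh expr2 -expRD -splitr.
by have := expR_ge0 (- t); nra.
Qed.

End cosh.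

Section besselK.
Context {R : realType}.
Implicit Types nu x t : R.

Local Notation mu := (@lebesgue_measure R).

Definition besselK_integrand nu x t : R := expR (- x * cosh t) * cosh (nu * t).

Definition besselK_integral nu x : \bar R :=
  (\int[mu]_(t in `[0%R, +oo[%classic) (besselK_integrand nu x t)%:E)%E.

Lemma besselKE nu x : besselK nu x = fine (besselK_integral nu x).
Proof. by []. Qed.

Lemma besselK_integrand_ge0 nu x t : 0 <= besselK_integrand nu x t.
Proof. by rewrite mulr_ge0 ?expR_ge0 ?cosh_ge0. Qed.

Lemma measurable_besselK_integrand nu x :
  measurable_fun setT (besselK_integrand nu x).
Proof.
apply: measurable_funM.
  apply: measurableT_comp => //; apply: measurable_funM => //.
  exact: measurable_cosh.
by apply: measurableT_comp; [exact: measurable_cosh | exact: measurable_funM].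
Qed.

Lemma besselK_integral_ge0 nu x : (0 <= besselK_integral nu x)%E.
Proof. by apply: integral_ge0 => t _; rewrite lee_fin besselK_integrand_ge0. Qed.

Lemma le_besselK_integral nu x y :
  (forall t, 0 <= t -> besselK_integrand nu x t <= besselK_integrand nu y t) ->
  (besselK_integral nu x <= besselK_integral nu y)%E.
Proof.
move=> xy; apply: ge0_le_integral => //.
- by move=> t _; rewrite lee_fin besselK_integrand_ge0.
- by apply/measurable_funTS/measurable_EFinP; exact: measurable_besselK_integrand.
- by apply/measurable_funTS/measurable_EFinP; exact: measurable_besselK_integrand.
- by move=> t; rewrite /= in_itv /= andbT lee_fin; exact: xy.
Qed.

(* From [cosh t >= t^2/8] by completing the square in [t]. *)
Lemma besselK_integrand_le nu x t : 0 <= nu -> 0 < x -> 0 <= t ->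
  besselK_integrand nu x t <= expR (2 * (nu + 1) ^+ 2 / x) * expR (- t).
Proof.
move=> nu0 x0 t0; rewrite /besselK_integrand -expRD.
apply: (le_trans (y := expR (- x * cosh t) * expR (nu * t))).
  by rewrite ler_wpM2l ?expR_ge0 // cosh_le_expR // mulr_ge0.
rewrite -expRD ler_expR.
have : x * (t ^+ 2 / 8) <= x * cosh t by rewrite ler_pM2l // sqr_le_cosh.
have -> : 2 * (nu + 1) ^+ 2 / x + - t =
    (- x * (t ^+ 2 / 8) + nu * t) + (x * t - 4 * (nu + 1)) ^+ 2 / (8 * x).
  by field; rewrite gt_eqF.
have : 0 <= (x * t - 4 * (nu + 1)) ^+ 2 / (8 * x).
  by rewrite divr_ge0 ?sqr_ge0 // mulr_ge0 // ltW.
lra.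
Qed.

Lemma besselK_integral_lty nu x :
  0 <= nu -> 0 < x -> (besselK_integral nu x < +oo)%E.
Proof.
move=> nu0 x0; set C := expR (2 * (nu + 1) ^+ 2 / x).
have p_ge0 t : 0 <= exponential_pdf 1 t by exact: exponential_pdf_ge0.
have mp : measurable_fun setT (exponential_pdf (1 : R)).
  exact: measurable_exponential_pdf.
apply: (@le_lt_trans _ _
  (\int[mu]_(t in `[0%R, +oo[%classic) (C * exponential_pdf 1 t)%:E)%E).
  apply: ge0_le_integral => //.
  - by move=> t _; rewrite lee_fin besselK_integrand_ge0.
  - by apply/measurable_funTS/measurable_EFinP; exact: measurable_besselK_integrand.
  - by apply/measurable_funTS/measurable_EFinP; exact: measurable_funM.
  move=> t; rewrite /= in_itv /= andbT => t0.
  by rewrite lee_fin exponential_pdfE // mul1r mulN1r besselK_integrand_le.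
under eq_integral do rewrite EFinM.
rewrite ge0_integralZl_EFin ?expR_ge0 //; last 2 first.
- by move=> t _; rewrite lee_fin.
- by apply/measurable_funTS/measurable_EFinP.
rewrite lte_mul_pinfty ?lee_fin ?expR_ge0 //.
apply: (@le_lt_trans _ _ (\int[mu]_t (exponential_pdf 1 t)%:E)%E).
  apply: ge0_subset_integral => //; first by apply/measurable_EFinP.
  by move=> t _; rewrite lee_fin.
by rewrite integral_exponential_pdf // ltry.
Qed.

Lemma besselK_integral_fin_num nu x :
  0 <= nu -> 0 < x -> besselK_integral nu x \is a fin_num.
Proof.
by move=> nu0 x0; rewrite ge0_fin_numE ?besselK_integral_lty ?besselK_integral_ge0.
Qed.

Lemma besselK_ge0 nu x : 0 <= besselK nu x.
Proof. exact/fine_ge0/besselK_integral_ge0. Qed.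

Lemma le_besselK nu x y :
  0 <= nu -> 0 < x -> x <= y -> besselK nu y <= besselK nu x.
Proof.
move=> nu0 x0 xy; rewrite !besselKE fine_le ?besselK_integral_fin_num //.
  exact: lt_le_trans xy.
apply: le_besselK_integral => t _; apply: ler_wpM2r; first exact: cosh_ge0.
by rewrite ler_expR !mulNr lerN2 ler_wpM2r // cosh_ge0.
Qed.

(* [x cosh t >= x / 2 + a cosh t] because [cosh t >= 1] and [x - a >= x / 2]. *)
Lemma besselK_le_expR nu a x : 0 <= nu -> 0 < a -> 2 * a <= x ->
  besselK nu x <= expR (- x / 2) * besselK nu a.
Proof.
move=> nu0 a0 ax; have x0 : 0 < x by lra.
rewrite -lee_fin !besselKE EFinM !fineK ?besselK_integral_fin_num //.
rewrite -ge0_integralZl_EFin ?expR_ge0 //; last 2 first.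
- by move=> t _; rewrite lee_fin besselK_integrand_ge0.
- by apply/measurable_funTS/measurable_EFinP; exact: measurable_besselK_integrand.
apply: ge0_le_integral => //.
- by move=> t _; rewrite lee_fin besselK_integrand_ge0.
- by apply/measurable_funTS/measurable_EFinP; exact: measurable_besselK_integrand.
- apply/measurable_funTS/measurable_EFinP; apply: measurable_funM => //.
  exact: measurable_besselK_integrand.
move=> t _; rewrite lee_fin /besselK_integrand [leRHS]mulrA -expRD.
rewrite ler_wpM2r ?cosh_ge0 // ler_expR.
by have := cosh_ge1 t; nra.
Qed.

End besselK.

Section xlnx.
Context {R : realType}.
Implicit Types x y b : R.

(* Both cases come from [ln y < y], applied to [y = x] and to [y = 1 / sqrt x]. *)
Lemma normr_xlnx_le x : 0 <= x -> `|x * ln x| <= 2 * Num.sqrt x + x ^+ 2.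
Proof.
move=> x_ge0; have [->|x_neq0] := eqVneq x 0.
  by rewrite mul0r normr0 addr_ge0 ?mulr_ge0 ?sqrtr_ge0 ?sqr_ge0.
have {x_ge0 x_neq0} x0 : 0 < x by rewrite lt_def x_neq0.
have s0 : 0 < Num.sqrt x by rewrite sqrtr_gt0.
have [x1|x1] := leP x 1; last first.
  rewrite ger0_norm ?mulr_ge0 ?ln_ge0 ?(ltW x0) ?(ltW x1) //.
  by have := ln_sublinear x0; have := sqrtr_ge0 x; nra.
have lnx : ln x = - (2 * ln (Num.sqrt x)^-1).
  by rewrite lnV ?posrE // -[in LHS](sqr_sqrtr (ltW x0)) lnXn // mulrN opprK mulr_natl.
have : x * ln (Num.sqrt x)^-1 <= x * (Num.sqrt x)^-1.
  by rewrite ler_wpM2l ?(ltW x0) ?(ltW (ln_sublinear _)) ?invr_gt0.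
have -> : x * (Num.sqrt x)^-1 = Num.sqrt x.
  by rewrite -{1}(sqr_sqrtr (ltW x0)) expr2 mulfK ?gt_eqF.
rewrite ler0_norm ?mulr_ge0_le0 ?ln_le0 ?(ltW x0) // lnx.
by have := sqr_ge0 x; lra.
Qed.

Lemma normr_xlnx_le_sqr b x y :
  0 <= b -> 0 <= x -> x <= b * y ^+ 2 -> 0 <= y <= 1 ->
  `|x * ln x| <= (2 * Num.sqrt b + b ^+ 2) * y.
Proof.
move=> b0 x0 xby /andP[y0 y1]; apply: (le_trans (normr_xlnx_le _ x0)).
have sqrt_x : Num.sqrt x <= Num.sqrt b * y.
  by rewrite -(ger0_norm y0) -sqrtr_sqr -sqrtrM // ler_sqrt // mulr_ge0 ?sqr_ge0.
have sqr_x : x ^+ 2 <= b ^+ 2 * y.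
  apply: (le_trans (y := (b * y ^+ 2) ^+ 2)).
    by rewrite ler_sqr ?nnegrE ?mulr_ge0 ?sqr_ge0.
  rewrite exprMn -exprM ler_wpM2l ?sqr_ge0 //.
  by rewrite -[leRHS]expr1 ler_wiXn2l.
by rewrite mulrDl; lra.
Qed.

End xlnx.

Section sqnorm.
Context {R : realType} {n : nat}.
Implicit Types v : n.-tuple R.

Lemma sqnorm_ge0 v : 0 <= sqnorm v.
Proof. by apply: sumr_ge0 => i _; exact: sqr_ge0. Qed.

Lemma measurable_sqnorm : measurable_fun setT (@sqnorm R n).
Proof.
by apply: measurable_sum => i; apply: measurable_funX; exact: measurable_tnth.
Qed.

Lemma sum_normr_le_sqrt_sqnorm v :
  \sum_(i < n) `|tnth v i| <= n%:R * Num.sqrt (sqnorm v).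
Proof.
apply: (le_trans (y := \sum_(i < n) Num.sqrt (sqnorm v))).
  apply: ler_sum => i _.
  rewrite -sqrtr_sqr ler_sqrt ?sqnorm_ge0 // /sqnorm (bigD1 i) //= lerDl.
  by apply: sumr_ge0 => j _; exact: sqr_ge0.
by rewrite sumr_const card_ord mulr_natl.
Qed.

End sqnorm.

Lemma exp_neg_l1_le1 {R : realType} (c : R) n (v : n.-tuple R) :
  0 <= c -> exp_neg_l1 c v <= 1.
Proof.
move=> c0; rewrite /exp_neg_l1 expR_le1 mulNr oppr_le0 mulr_ge0 //.
by apply: sumr_ge0 => i _.
Qed.

Lemma integrable_le_exp_neg_l1 {R : realType} {n} {c C : R}
    {f : n.-tuple R -> R} :
  0 < c -> measurable_fun setT f -> (forall v, `|f v| <= C * exp_neg_l1 c v) ->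
  (lebesgue_tuple n).-integrable setT (EFin \o f).
Proof.
move=> c0 mf f_le; have := integral_exp_neg_l1_lty _ n c0.
rewrite lebesgue_tupleE => g_lty.
apply: (@le_integrable _ _ _ _ _ _ _
  (fun v => C%:E * (exp_neg_l1 c v)%:E)%E) => //.
- by apply/measurable_EFinP.
- by move=> v _; rewrite -EFinM !abse_EFin lee_fin (le_trans (f_le v)) ?ler_norm.
apply: integrableZl => //; apply/integrableP; split.
  by apply/measurable_EFinP; exact: measurable_exp_neg_l1.
rewrite (eq_integral (fun v => (exp_neg_l1 c v)%:E)) // => v _.
by rewrite abse_EFin ger0_norm // expR_ge0.
Qed.

Section ndfhl_density.
Context {R : realType} (d : nat) (lam u : R).
Hypotheses (d2 : (2 <= d)%N) (lam0 : 0 < lam) (u0 : 0 < u).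

Let lam_ge0 : 0 <= lam := ltW lam0.
Let u_ge0 : 0 <= u := ltW u0.
Let h : R := d%:R / 2.
Let coef : R := lam / (2 `^ (h - 1) * pi `^ h).

Let coef_ge0 : 0 <= coef.
Proof. by rewrite divr_ge0 ?mulr_ge0 ?powR_ge0. Qed.

(* The radial profile of the density, with [rho] replaced by [max rho lam]:
   this changes nothing since [rho >= lam], but makes the profile
   nonincreasing on all of [R], hence measurable. *)
Definition ndfhl_profile (y : R) : R :=
  let r := Num.max y lam in
  coef * (u / r) `^ h * expR (lam * u) * besselK h (u * r).

Definition ndfhl_bound : R :=
  coef * (u / lam) `^ h * expR (lam * u) * besselK h (u * lam / 2).

Let h_ge0 : 0 <= h. Proof. by rewrite divr_ge0. Qed.

Lemma ndfhl_bound_ge0 : 0 <= ndfhl_bound.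
Proof.
by rewrite /ndfhl_bound !mulr_ge0 ?invr_ge0 ?mulr_ge0 ?powR_ge0 ?expR_ge0 ?besselK_ge0.
Qed.

Lemma ndfhl_profile_ge0 y : 0 <= ndfhl_profile y.
Proof.
by rewrite /ndfhl_profile !mulr_ge0 ?invr_ge0 ?mulr_ge0 ?powR_ge0 ?expR_ge0
  ?besselK_ge0.
Qed.

Lemma ndfhl_densityE v :
  ndfhl_density d lam u v = ndfhl_profile (Num.sqrt (sqnorm v + lam ^+ 2)).
Proof.
rewrite /ndfhl_profile max_l //; apply: le_trans (_ : Num.sqrt (lam ^+ 2) <= _).
  by rewrite sqrtr_sqr ger0_norm.
by rewrite ler_sqrt ?addr_ge0 ?sqnorm_ge0 ?sqr_ge0 // lerDr sqnorm_ge0.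
Qed.

Let powR_u_div_le r1 r2 : 0 < r1 -> r1 <= r2 -> (u / r2) `^ h <= (u / r1) `^ h.
Proof.
move=> r1_gt0 r12; have r2_gt0 : 0 < r2 := lt_le_trans r1_gt0 r12.
rewrite ge0_ler_powR ?nnegrE ?divr_ge0 ?(ltW r1_gt0) ?(ltW r2_gt0) //.
by rewrite ler_wpM2l // lef_pV2.
Qed.

Lemma ndfhl_profile_nonincreasing : {homo ndfhl_profile : x y /~ x <= y}.
Proof.
move=> y x xy; rewrite /ndfhl_profile.
have lam_le r : lam <= Num.max r lam by rewrite le_max lexx orbT.
have max_le : Num.max x lam <= Num.max y lam by rewrite ge_max !le_max xy lexx !orbT.
have max_gt0 : 0 < Num.max x lam := lt_le_trans lam0 (lam_le x).
rewrite ler_pM ?mulr_ge0 ?invr_ge0 ?mulr_ge0 ?powR_ge0 ?expR_ge0 ?besselK_ge0 //.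
  by rewrite ler_wpM2r ?expR_ge0 // ler_wpM2l // powR_u_div_le.
by rewrite le_besselK ?mulr_gt0 // ler_wpM2l.
Qed.

Lemma ndfhl_profile_le y :
  ndfhl_profile y <= ndfhl_bound * expR (- (u * Num.max y lam) / 2).
Proof.
rewrite /ndfhl_profile /ndfhl_bound.
have lam_le : lam <= Num.max y lam by rewrite le_max lexx orbT.
rewrite -[leRHS]mulrA [besselK _ _ * _]mulrC.
rewrite ler_pM ?mulr_ge0 ?invr_ge0 ?mulr_ge0 ?powR_ge0 ?expR_ge0 ?besselK_ge0 //.
  by rewrite ler_wpM2r ?expR_ge0 // ler_wpM2l // powR_u_div_le.
rewrite besselK_le_expR ?mulr_gt0 ?divr_gt0 //.
by rewrite mulrCA divff ?mulr1 ?pnatr_eq0 // ler_wpM2l.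
Qed.

Lemma measurable_ndfhl_density : measurable_fun setT (ndfhl_density d lam u).
Proof.
rewrite (funext ndfhl_densityE); apply: measurableT_comp.
  apply: nonincreasing_measurable => // a b ab.
  exact: ndfhl_profile_nonincreasing.
apply: measurableT_comp.
  exact: continuous_measurable_fun (@sqrt_continuous R).
by apply: measurable_funD => //; exact: measurable_sqnorm.
Qed.

Let c : R := u / (4 * (d.-1)%:R).

Let c_gt0 : 0 < c.
Proof. by rewrite divr_gt0 // mulr_gt0 // ltr0n -subn1 subn_gt0. Qed.

Lemma ndfhl_density_le v :
  ndfhl_density d lam u v <= ndfhl_bound * exp_neg_l1 c v ^+ 2.
Proof.
have n_gt0 : 0 < (d.-1)%:R :> R by rewrite ltr0n -subn1 subn_gt0.
rewrite ndfhl_densityE (le_trans (ndfhl_profile_le _)) //.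
rewrite ler_wpM2l ?ndfhl_bound_ge0 //.
rewrite /exp_neg_l1 [leRHS]expr2 -expRD ler_expR.
set S := \sum_(i < d.-1) _; set r := Num.sqrt _.
have S_le : S <= (d.-1)%:R * Num.max r lam.
  apply: le_trans (sum_normr_le_sqrt_sqnorm v) _; rewrite ler_wpM2l ?ler0n //.
  by rewrite le_max ler_sqrt ?addr_ge0 ?sqnorm_ge0 ?sqr_ge0 // lerDl sqr_ge0.
have -> : - c * S + - c * S = - (u * (S / (d.-1)%:R)) / 2.
  by rewrite /c; field; rewrite gt_eqF.
by rewrite !mulNr lerN2 ler_pM2r // ler_wpM2l // ler_pdivrMr // mulrC.
Qed.

Lemma normr_ndfhl_xlnx_le v :
  `|ndfhl_density d lam u v * ln (ndfhl_density d lam u v)|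
    <= (2 * Num.sqrt ndfhl_bound + ndfhl_bound ^+ 2) * exp_neg_l1 c v.
Proof.
apply: normr_xlnx_le_sqr; rewrite ?ndfhl_bound_ge0 ?ndfhl_density_le ?expR_ge0 //.
- by rewrite ndfhl_densityE ndfhl_profile_ge0.
- by rewrite exp_neg_l1_le1 // ltW.
Qed.

Lemma integrable_ndfhl_xlnx : (lebesgue_tuple d.-1).-integrable setT
  (fun v => (ndfhl_density d lam u v * ln (ndfhl_density d lam u v))%:E).
Proof.
have mf := measurable_ndfhl_density.
have mxlnx : measurable_fun setT
    (fun v => ndfhl_density d lam u v * ln (ndfhl_density d lam u v)).
  apply: measurable_funM => //.
  by apply: measurableT_comp => //; exact: measurable_ln.
exact: (integrable_le_exp_neg_l1 c_gt0 mxlnx normr_ndfhl_xlnx_le).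
Qed.

End ndfhl_density.

Theorem lemma9 (R : realType) (d : nat) (lam u : R) :
  (2 <= d)%N -> 0 < lam -> 0 < u ->
  (lebesgue_tuple d.-1).-integrable setT
     (fun v => (ndfhl_density d lam u v * ln (ndfhl_density d lam u v))%:E)
  /\ diff_entropy d.-1 (ndfhl_density d lam u) \is a fin_num.
Proof.
move=> d2 lam0 u0; have xlnx_int := integrable_ndfhl_xlnx d lam u d2 lam0 u0.
split => //; rewrite /diff_entropy fin_numN.
by move: xlnx_int; rewrite lebesgue_tupleE; exact: integrable_fin_num.
Qed.
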